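(* Let $G$ be a looped simple graph with vertices listed as $v_1,\dots,v_n$. The following are equivalent: (1) there is a sequence of $n-1$ pendant-twin reductions starting from $G$ in which the $i$-th reduction deletes the vertex $v_i$; (2) there is a sequence of $n-1$ isotropic parallel reductions starting from $M[IAS(G)]$ in which the $i$-th reduction removes the vertex triple of $v_i$.
   Context: A looped simple graph is a finite graph in which each vertex carries at most one loop and no two distinct vertices are joined by more than one edge. ''Adjacent''/''neighbors'' refer only to distinct vertices joined by a non-loop edge; $N_G(v)$ is the set of neighbors of $v$; the degree of $v$ is $|N_G(v)|$; $v$ is isolated if $N_G(v)=\emptyset$. $A(G)$ is the $V(G)\times V(G)$ matrix over $GF(2)$ with diagonal entry $1$ exactly at looped vertices and off-diagonal entry $1$ exactly for adjacent pairs. $IAS(G)=(I\mid A(G)\mid A(G)+I)$ over $GF(2)$, rows indexed by $V(G)$; the $v$-columns of the three blocks are labelled $\phi_G(v),\chi_G(v),\psi_G(v)$. $M[IAS(G)]$ is the binary column matroid of $IAS(G)$ on $W(G)=\{\phi_G(v),\chi_G(v),\psi_G(v):v\in V(G)\}$; $\tau_G(v)=\{\phi_G(v),\chi_G(v),\psi_G(v)\}$ is the vertex triple of $v$. Pendant-twin reduction of $G$: delete an isolated vertex; or delete a vertex $v$ that has a twin $w\neq v$, i.e. either $N_G(v)=N_G(w)\neq\emptyset$ (nonadjacent twins) or $N_G(v)\cup\{v\}=N_G(w)\cup\{w\}$ (adjacent twins); or delete a vertex of degree $1$. Isotropic parallel reduction: two elements are parallel in a matroid if both are loops or if they form a $2$-element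 circuit. If $\rho\ne\sigma$ are parallel elements of $M[IAS(G)]$ and $\rho$ is not of the form $\phi_G(\cdot)$, say $\rho\in\tau_G(v)$, the isotropic parallel reduction corresponding to $\rho,\sigma$ is the matroid obtained from $M[IAS(G)]$ by contracting $\phi_G(v)$ and deleting the other two elements of $\tau_G(v)$ (it ''removes the vertex triple of $v$''); this matroid equals $M[IAS(G-v)]$ with the same element labels, so reductions can be iterated. *)

From HB Require Import structures.
From mathcomp Require Import all_boot all_order all_algebra.
Set Implicit Arguments. Unset Strict Implicit. Unset Printing Implicit Defensive.
Import GRing.Theory.
Local Open Scope ring_scope.

(* A looped simple graph on the vertex set 'I_n (vertex v_(i+1) is i : 'I_n)
   is given by a symmetric irreflexive adjacency relation [adj] and the set
   [loops] of looped vertices.  All constructions below are relative to the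
   induced subgraph G[S] on a vertex set S : {set 'I_n} (the graph obtained
   from G after deleting the vertices outside S). *)

Definition nbhd (n : nat) (adj : rel 'I_n) (S : {set 'I_n}) (v : 'I_n)
  : {set 'I_n} := [set u in S | (u != v) && adj v u].

Definition pendant_twin_red (n : nat) (adj : rel 'I_n) (S : {set 'I_n})
  (v : 'I_n) : Prop :=
  v \in S /\
  (nbhd adj S v = set0
   \/ (exists w, [/\ w \in S, w != v & nbhd adj S v = nbhd adj S w /\ nbhd adj S v != set0])
   \/ (exists w, [/\ w \in S, w != v & v |: nbhd adj S v = w |: nbhd adj S w])
   \/ #|nbhd adj S v| = 1%N).

(* labels of the columns of IAS : phi_G(v), chi_G(v), psi_G(v) *)
Inductive wkind := Phi | Chi | Psi.
Definition welt (n : nat) := (wkind * 'I_n)%type.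

Definition adjmx_entry (n : nat) (adj : rel 'I_n) (loops : {set 'I_n})
  (u v : 'I_n) : 'F_2 :=
  (if u == v then v \in loops else adj u v)%:R.

(* the column of IAS(G[S]) labelled e, as a vector indexed by 'I_n whose
   entries outside S (rows not in V(G[S])) are 0 *)
Definition ias_col (n : nat) (adj : rel 'I_n) (loops : {set 'I_n})
  (S : {set 'I_n}) (e : welt n) : 'rV['F_2]_n :=
  \row_u (if u \in S then
            match e.1 with
            | Phi => ((u == e.2)%:R : 'F_2)
            | Chi => adjmx_entry adj loops u e.2
            | Psi => adjmx_entry adj loops u e.2 + (u == e.2)%:R
            end
          else 0).

Definition in_W (n : nat) (S : {set 'I_n}) (e : welt n) : Prop := e.2 \in S.

(* matroid notions in the binary column matroid M[IAS(G[S])]: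
   a set of elements is independent iff its columns are linearly independent *)
Definition is_loop (n : nat) adj loops (S : {set 'I_n}) (e : welt n) : Prop :=
  in_W S e /\ ~~ free [:: ias_col adj loops S e].

Definition is_circuit2 (n : nat) adj loops (S : {set 'I_n}) (e f : welt n) : Prop :=
  [/\ in_W S e, in_W S f, e <> f &
      [/\ ~~ free [:: ias_col adj loops S e; ias_col adj loops S f],
           free [:: ias_col adj loops S e] & free [:: ias_col adj loops S f]]].

Definition parallel (n : nat) adj loops (S : {set 'I_n}) (e f : welt n) : Prop :=
  (is_loop adj loops S e /\ is_loop adj loops S f) \/ is_circuit2 adj loops S e f.

(* there is an isotropic parallel reduction of M[IAS(G[S])] removing the
   vertex triple of v: parallel rho <> sigma with rho in tau(v), rho not phi.
   (By the stated fact, the resulting matroid is M[IAS(G[S :\ v])].) *)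
Definition iso_parallel_red (n : nat) adj loops (S : {set 'I_n}) (v : 'I_n) : Prop :=
  exists rho sigma : welt n,
    [/\ rho.2 = v, rho.1 <> Phi, rho <> sigma & parallel adj loops S rho sigma].

(* vertex set remaining after deleting v_1, ..., v_i (i.e. 0, ..., i-1) *)
Definition remaining (n : nat) (i : nat) : {set 'I_n} := [set j : 'I_n | i <= j]%N.

From HB Require Import structures.
From mathcomp Require Import all_boot all_order all_algebra.
Import GRing.Theory.
Set Implicit Arguments. Unset Strict Implicit. Unset Printing Implicit Defensive.
Local Open Scope ring_scope.

(* Over GF(2) every column of IAS(G) is the indicator vector of its support,
   and the supports in the triple of v are {v}, N(v) and N[v] = N(v) + v (the
   loop at v only decides which of chi(v), psi(v) gets which).  Two distinct
   elements of a binary matroid are parallel exactly when their columns are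
   equal, so an isotropic parallel reduction removing v exists iff N(v) or N[v]
   equals another support {w}, N(w) or N[w].  Unwinding the six cases, this is
   precisely the condition that v is isolated, pendant, or has a (non)adjacent
   twin.  Both sequences delete v_1, ..., v_(n-1) in the same order, so the
   corollary holds step by step. *)

Section BinaryColumns.

Variable n : nat.

Definition indicator_row (A : {set 'I_n}) : 'rV['F_2]_n := \row_u (u \in A)%:R.

Lemma indicator_row_inj : injective indicator_row.
Proof.
move=> A B /rowP eqAB; apply/setP => u; have := eqAB u; rewrite !mxE.
by case: (u \in A); case: (u \in B) => //= /eqP;
  rewrite ?mulr1n ?mulr0n ?oner_eq0 // eq_sym oner_eq0.
Qed.

Lemma F2_scalar (k : 'F_2) : k = 0 \/ k = 1.
Proof. by case: k => [[|[|m]]] // k_lt2; [left|right]; apply/val_inj. Qed.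

Lemma F2_parallel (a b : 'rV['F_2]_n) :
  (~~ free [:: a] /\ ~~ free [:: b]) \/ [/\ ~~ free [:: a; b], free [:: a] & free [:: b]]
  <-> a = b.
Proof.
rewrite !seq1_free !negbK; split=> [[[/eqP-> /eqP->] | [dep a0 b0]] | <-] //.
  move: dep a0; rewrite free_cons seq1_free span_seq1 b0 andbT negbK => /vlineP[k ->].
  by case: (F2_scalar k) => ->; rewrite ?scale0r ?eqxx ?scale1r.
have [-> | a0] := eqVneq a 0; [by left | right].
by rewrite free_cons span_seq1 memv_line.
Qed.

End BinaryColumns.

Section Supports.

Variables (n : nat) (adj : rel 'I_n) (loops S : {set 'I_n}).
Hypothesis adj_sym : symmetric adj.

Definition closed_nbhd (v : 'I_n) : {set 'I_n} := v |: nbhd adj S v.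

Definition ias_support (e : welt n) : {set 'I_n} :=
  match e.1, e.2 \in loops with
  | Phi, _ => [set e.2]
  | Chi, true | Psi, false => closed_nbhd e.2
  | Chi, false | Psi, true => nbhd adj S e.2
  end.

Lemma mem_nbhd v u : (u \in nbhd adj S v) = [&& u \in S, u != v & adj v u].
Proof. by rewrite inE. Qed.

Lemma nbhd_sym v w : v \in S -> w \in S -> (v \in nbhd adj S w) = (w \in nbhd adj S v).
Proof. by move=> vS wS; rewrite !mem_nbhd vS wS eq_sym adj_sym. Qed.

Lemma notin_nbhd v : v \notin nbhd adj S v.
Proof. by rewrite mem_nbhd eqxx andbF. Qed.

Lemma F2_bool_add1 (b : bool) : (b%:R + 1 : 'F_2) = (~~ b)%:R.
Proof. by case: b; apply/val_inj. Qed.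

Lemma ias_colE e : in_W S e -> ias_col adj loops S e = indicator_row (ias_support e).
Proof.
case: e => k v; rewrite /in_W /= => vS; apply/rowP => u.
rewrite !mxE /adjmx_entry /ias_support /closed_nbhd /=.
have [uS | uNS] := boolP (u \in S); last first.
  have uv : u != v by apply: contraNneq uNS => ->.
  by case: k; case: (v \in loops); rewrite !inE ?(negbTE uNS) (negbTE uv) ?andbF.
have [-> | uv] := eqVneq u v.
  by case: k; case: (v \in loops); rewrite !inE ?eqxx ?andbF ?F2_bool_add1.
by case: k; case: (v \in loops); rewrite !inE ?uS (negbTE uv) //= ?addr0 (adj_sym u v).
Qed.

Lemma parallelE e f : e <> f ->
  parallel adj loops S e f <-> [/\ in_W S e, in_W S f & ias_support e = ias_support f].
Proof.
move=> ef; split.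
  case=> [[[eW loop_e] [fW loop_f]] | [eW fW _ dep]]; split=> //;
    apply: indicator_row_inj; rewrite -!ias_colE //; apply/F2_parallel; by [left | right].
case=> eW fW supp_ef.
have /F2_parallel[[] | []] : ias_col adj loops S e = ias_col adj loops S f.
  by rewrite !ias_colE // supp_ef.
- by left.
- by right.
Qed.

Lemma ias_support_cases k w :
  [\/ ias_support (k, w) = [set w], ias_support (k, w) = nbhd adj S w
    | ias_support (k, w) = closed_nbhd w].
Proof. by rewrite /ias_support /=; case: k; case: (w \in loops); constructor. Qed.

Lemma ias_support_nPhi k v : k <> Phi ->
  ias_support (k, v) = nbhd adj S v \/ ias_support (k, v) = closed_nbhd v.
Proof.
by rewrite /ias_support /=; case: k; case: (v \in loops) => // _; [right | left | left | right].
Qed.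

Lemma ias_support_nbhd v (closed : bool) :
  exists2 k, k <> Phi & ias_support (k, v) = if closed then closed_nbhd v else nbhd adj S v.
Proof.
rewrite /ias_support /=; case: closed; case: (v \in loops);
  by [exists Chi | exists Psi].
Qed.

Lemma ias_support_kind_inj k k' v : k <> k' ->
  ias_support (k, v) = ias_support (k', v) -> nbhd adj S v = set0.
Proof.
have set1_closed : [set v] = closed_nbhd v -> nbhd adj S v = set0.
  move/setP=> eqN; apply/setP => u; rewrite in_set0; apply/negbTE.
  have := eqN u; rewrite in_set1 in_setU1.
  by case: eqVneq => [-> _ | _ /= <-]; rewrite ?notin_nbhd.
have nbhd_closed : nbhd adj S v <> closed_nbhd v.
  by move/setP/(_ v); rewrite setU11 (negbTE (notin_nbhd v)).
have set1_nbhd : [set v] <> nbhd adj S v.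
  by move/setP/(_ v); rewrite set11 (negbTE (notin_nbhd v)).
rewrite /ias_support /=; case: k; case: k'; case: (v \in loops) => //= _ eqs;
  by [apply: set1_closed | apply: set1_closed; rewrite eqs | case: nbhd_closed
     | case: set1_nbhd | case: set1_nbhd; rewrite eqs].
Qed.

Definition support_twins (v : 'I_n) : Prop :=
  exists rho sigma : welt n,
    [/\ rho.2 = v, rho.1 <> Phi, rho <> sigma, sigma.2 \in S
       & ias_support rho = ias_support sigma].

Lemma iso_parallel_red_twins v : v \in S -> iso_parallel_red adj loops S v <-> support_twins v.
Proof.
move=> vS; split=> [[rho [sigma [rv rP rs /(parallelE rs)[_ sW eqs]]]] | ].
  by exists rho, sigma.
move=> [rho [sigma [rv rP rs sS eqs]]].
by exists rho, sigma; split=> //; apply/parallelE => //; rewrite /in_W rv.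
Qed.

Lemma pendant_twin_red_twins v : v \in S -> pendant_twin_red adj S v -> support_twins v.
Proof.
move=> vS [_ [isolated | [[w [wS wv [twin _]]] | [[w [wS wv twin]] | /eqP/cards1P[w Nv]]]]].
- have [k kP supp] := ias_support_nbhd v true.
  exists (k, v), (Phi, v); split=> //; first by case.
  by rewrite supp /closed_nbhd isolated setU0.
- have [k kP supp] := ias_support_nbhd v false; have [k' _ supp'] := ias_support_nbhd w false.
  exists (k, v), (k', w); split=> //; last by rewrite supp supp'.
  by case=> _ /eqP; rewrite eq_sym (negbTE wv).
- have [k kP supp] := ias_support_nbhd v true; have [k' _ supp'] := ias_support_nbhd w true.
  exists (k, v), (k', w); split=> //; last by rewrite supp supp'.
  by case=> _ /eqP; rewrite eq_sym (negbTE wv).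
- have [k kP supp] := ias_support_nbhd v false.
  have : w \in nbhd adj S v by rewrite Nv set11.
  rewrite mem_nbhd => /and3P[wS _ _].
  by exists (k, v), (Phi, w); split=> //; [case | rewrite supp Nv].
Qed.

Lemma twin_nbhd_pendant_twin v w : v \in S -> w \in S -> w != v ->
  [\/ nbhd adj S v = [set w], nbhd adj S v = nbhd adj S w | nbhd adj S v = closed_nbhd w] ->
  pendant_twin_red adj S v.
Proof.
move=> vS wS wv eqs; split=> //.
have [isolated | nonisolated] := eqVneq (nbhd adj S v) set0; first by left.
case: eqs => [Nv | twin | Nv_closed].
- by right; right; right; rewrite Nv cards1.
- by right; left; exists w.
have : w \in nbhd adj S v by rewrite Nv_closed setU11.
rewrite -nbhd_sym // => vNw.
by have := notin_nbhd v; rewrite Nv_closed inE vNw orbT.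
Qed.

Lemma twin_closed_nbhd_pendant_twin v w : v \in S -> w \in S -> w != v ->
  [\/ closed_nbhd v = [set w], closed_nbhd v = nbhd adj S w | closed_nbhd v = closed_nbhd w] ->
  pendant_twin_red adj S v.
Proof.
move=> vS wS wv [Nv | Nv_open | twin]; split=> //.
- by have := setU11 v (nbhd adj S v); rewrite -/(closed_nbhd v) Nv inE eq_sym (negbTE wv).
- have : v \in nbhd adj S w by rewrite -Nv_open setU11.
  rewrite nbhd_sym // => wNv.
  by have := notin_nbhd w; rewrite -Nv_open inE wNv orbT.
- by right; right; left; exists w.
Qed.

Lemma twins_pendant_twin_red v : v \in S -> support_twins v -> pendant_twin_red adj S v.
Proof.
move=> vS [[k _] [[k' w] [/= -> kP rs wS eqs]]].
have [wv | wv] := eqVneq w v.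
  have kk' : k <> k' by move=> kk'; apply: rs; rewrite kk' wv.
  by split=> //; left; apply: ias_support_kind_inj kk' _; rewrite eqs wv.
move: (ias_support_cases k' w); rewrite -eqs.
case: (ias_support_nPhi v kP) => ->.
- exact: twin_nbhd_pendant_twin.
- exact: twin_closed_nbhd_pendant_twin.
Qed.

Lemma pendant_twin_red_iso_parallel v : v \in S ->
  pendant_twin_red adj S v <-> iso_parallel_red adj loops S v.
Proof.
move=> vS; split=> [/(pendant_twin_red_twins vS)/(iso_parallel_red_twins vS) //|].
by move=> /(iso_parallel_red_twins vS); apply: twins_pendant_twin_red.
Qed.

End Supports.

Theorem corollary9p7 (n : nat) (adj : rel 'I_n) (loops : {set 'I_n})
  (adj_sym : symmetric adj) (adj_irr : irreflexive adj) :
  (forall i : 'I_n, (i.+1 < n)%N -> pendant_twin_red adj (remaining n i) i)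
  <->
  (forall i : 'I_n, (i.+1 < n)%N -> iso_parallel_red adj loops (remaining n i) i).
Proof.
have step (i : 'I_n) :
    pendant_twin_red adj (remaining n i) i <-> iso_parallel_red adj loops (remaining n i) i.
  by apply: (pendant_twin_red_iso_parallel _ adj_sym); rewrite inE.
by split=> red i lt_i; apply/step; apply: red.
Qed.
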